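(* Let $q$ be a positive rational number and let $M_q$ be the exponentially cyclic Puiseux monoid parametrized by $q$. If the monoid algebra $\mathbb{Z}[M_q]$ is atomic, then the monoid algebra $\mathbb{Q}[M_q]$ is atomic.
   Context: For a positive rational $q$, $M_q := \langle q^n : n \in \mathbb{N}_0 \rangle$ is the additive submonoid of $(\mathbb{Q}_{\geq 0},+)$ generated by the powers of $q$. For a commutative ring $R$, $R[M_q]$ denotes the monoid algebra: finite expressions $\sum_i r_i x^{m_i}$ with $r_i \in R$ and $m_i \in M_q$, with multiplication determined by $x^a x^b = x^{a+b}$. An integral domain is atomic if every nonzero nonunit is a finite product of irreducible elements. *)

From HB Require Import structures.
From mathcomp Require Import all_boot all_order all_algebra.
From mathcomp Require Import boolp.
From mathcomp.multinomials Require Import monalg.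

Set Implicit Arguments.
Unset Strict Implicit.
Unset Printing Implicit Defensive.

Import Order.TTheory GRing.Theory Num.Theory.
Local Open Scope ring_scope.

Definition posrat := {q : rat | 0 < q}.

(* Membership in M_q = < q^n : n in N_0 >, the additive submonoid of
   (Q_{>=0},+) generated by the powers of q: finite sums of powers of q. *)
Definition inMq (q : posrat) (x : rat) : Prop :=
  exists s : seq nat, x = \sum_(n <- s) (val q) ^+ n.

Definition Mq_pred (q : posrat) : pred rat := fun x => `[< inMq q x >].

(* The monoid M_q as a type (written additively in the paper; here its
   operation is rational addition and its neutral element 0). *)
Definition Mq (q : posrat) := {x : rat | Mq_pred q x}.

HB.instance Definition _ q := [isSub for (@proj1_sig rat (Mq_pred q)) : Mq q -> rat].
HB.instance Definition _ q := [Choice of Mq q by <:].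

Section MqMonoid.
Variable q : posrat.

Lemma Mq0 : Mq_pred q 0.
Proof. by apply/asboolP; exists [::]; rewrite big_nil. Qed.

Lemma MqD (x y : rat) : Mq_pred q x -> Mq_pred q y -> Mq_pred q (x + y).
Proof.
move=> /asboolP [s ->] /asboolP [t ->]; apply/asboolP.
by exists (s ++ t); rewrite big_cat.
Qed.

Lemma Mq_ge0 (x : rat) : Mq_pred q x -> 0 <= x.
Proof.
move=> /asboolP [s ->]; apply: sumr_ge0 => n _.
by apply: exprn_ge0; apply: ltW; case: q.
Qed.

Definition Mq_zero : Mq q := exist _ 0 Mq0.
Definition Mq_add (x y : Mq q) : Mq q := exist _ (val x + val y) (MqD (valP x) (valP y)).

Lemma Mq_addA : associative Mq_add.
Proof. by move=> x y z; apply: val_inj; rewrite /= addrA. Qed.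
Lemma Mq_add0m : left_id Mq_zero Mq_add.
Proof. by move=> x; apply: val_inj; rewrite /= add0r. Qed.
Lemma Mq_addm0 : right_id Mq_zero Mq_add.
Proof. by move=> x; apply: val_inj; rewrite /= addr0. Qed.
Lemma Mq_addC : commutative Mq_add.
Proof. by move=> x y; apply: val_inj; rewrite /= addrC. Qed.
Lemma Mq_unit (x y : Mq q) : Mq_add x y = Mq_zero -> x = Mq_zero /\ y = Mq_zero.
Proof.
move=> /(congr1 val) /= /eqP; rewrite paddr_eq0 ?Mq_ge0 ?(valP x) ?(valP y) //.
by case/andP=> /eqP hx /eqP hy; split; apply: val_inj.
Qed.
End MqMonoid.

HB.instance Definition _ q := Choice_isMonomialDef.Build (Mq q)
  (@Mq_addA q) (@Mq_add0m q) (@Mq_addm0 q) (@Mq_unit q).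
HB.instance Definition _ q := MonomialDef_isConomialDef.Build (Mq q) (@Mq_addC q).

(* The monoid algebra R[M_q] is {malg R[Mq q]} (multinomials' monalg):
   finitely supported functions M_q -> R with convolution product
   x^a x^b = x^(a+b). *)

Definition is_unit_elt (R : comNzRingType) (a : R) : Prop := exists b : R, a * b = 1.

Definition irreducible_elt (R : comNzRingType) (a : R) : Prop :=
  a != 0 /\ ~ is_unit_elt a /\
  forall b c : R, a = b * c -> is_unit_elt b \/ is_unit_elt c.

Definition atomic (R : comNzRingType) : Prop :=
  forall a : R, a != 0 -> ~ is_unit_elt a ->
    exists s : seq R, (forall x, x \in s -> irreducible_elt x) /\
                      a = \prod_(x <- s) x.

(* Order M_q by the rational value of its elements.  In R[M_q], if every
   coefficient of g1 above the exponent i, and every coefficient of g2 above j,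
   lies in an ideal P, then (g1 g2)_(i+j) = (g1)_i (g2)_j modulo P.  With P = 0
   this shows that over a domain the units of R[M_q] are constants; with
   P = pZ it gives Gauss's lemma: if a prime p divides every coefficient of AB,
   it divides every coefficient of A or every coefficient of B.
   Let f be a nonzero nonunit of Q[M_q]; it is nonconstant.  Clearing
   denominators, n f = F lies in Z[M_q], and F is a product of irreducibles of
   Z[M_q].  The constant factors are units of Q[M_q], and a nonconstant
   irreducible g of Z[M_q] stays irreducible in Q[M_q]: a factorization of g
   into two nonconstants of Q[M_q] clears to BC = N g in Z[M_q] with B, C
   nonconstant, and Gauss's lemma cancels the prime factors of N one at a time
   until B C = g contradicts irreducibility in Z[M_q]. *)

From HB Require Import structures.
From mathcomp Require Import all_boot all_order all_algebra.
From mathcomp.multinomials Require Import monalg.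
From mathcomp Require Import finmap boolp.
From mathcomp Require Import ring lra.

Set Implicit Arguments.
Unset Strict Implicit.
Unset Printing Implicit Defensive.

Import Order.TTheory GRing.Theory Num.Theory.
Local Open Scope ring_scope.

Section Factorization.
Variable R : comNzRingType.
Implicit Types u v a : R.

Lemma is_unit_eltM u v : is_unit_elt u -> is_unit_elt v -> is_unit_elt (u * v).
Proof.
by move=> [a ua] [b vb]; exists (a * b); rewrite mulrACA ua vb mulr1.
Qed.

Lemma irreducible_eltMl u a :
  is_unit_elt u -> irreducible_elt a -> irreducible_elt (u * a).
Proof.
move=> [w uw] [a_neq0 [a_nonunit a_irr]].
have a_eq b : u * a = b -> a = w * b.
  by move <-; rewrite mulrA (mulrC w) uw mul1r.
split; [|split].
- by apply: contraNneq a_neq0 => /a_eq ->; rewrite mulr0.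
- by move=> [v uav]; apply: a_nonunit; exists (u * v); rewrite mulrCA mulrA.
- move=> b c /a_eq; rewrite mulrA => /a_irr [[v wbv]|]; last by right.
  by left; exists (w * v); rewrite mulrCA mulrA.
Qed.

Lemma factor_into_irreducibles u (s : seq R) :
  is_unit_elt u -> (forall x, x \in s -> is_unit_elt x \/ irreducible_elt x) ->
  ~ is_unit_elt (u * \prod_(x <- s) x) ->
  exists t : seq R, (forall y, y \in t -> irreducible_elt y) /\
                    u * \prod_(x <- s) x = \prod_(y <- t) y.
Proof.
elim: s u => [|x s IH] u u_unit s_fact; first by rewrite big_nil mulr1.
have s'_fact y : y \in s -> is_unit_elt y \/ irreducible_elt y.
  by move=> sy; apply: s_fact; rewrite inE sy orbT.
rewrite big_cons mulrCA => nonunit.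
have [x_unit|x_irr] := s_fact x (mem_head x s).
  by move: nonunit; rewrite mulrA; apply: IH => //; apply: is_unit_eltM.
have [us_unit|us_nonunit] := pselect (is_unit_elt (u * \prod_(y <- s) y)).
  exists [:: u * \prod_(y <- s) y * x]; split; last by rewrite big_seq1 mulrC.
  by move=> y /[!inE] /eqP ->; apply: irreducible_eltMl.
have [t [t_irr ->]] := IH u u_unit s'_fact us_nonunit.
exists (x :: t); split; last by rewrite big_cons.
by move=> y /[!inE] /predU1P [->|/t_irr].
Qed.

End Factorization.

Lemma seq_has_max (T : eqType) (d : Order.disp_t) (O : orderType d)
    (f : T -> O) (P : pred T) (s : seq T) :
  has P s ->
  exists2 i, (i \in s) && P i & forall k, k \in s -> P k -> (f k <= f i)%O.
Proof.
elim: s => //= a s IH.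
have [/IH [i /andP [si Pi] i_max] _|/hasPn noP /orP [Pa|//]] := boolP (has P s).
- have [/andP [Pa lt_ia]|not_gt] := boolP (P a && (f i < f a)%O).
    exists a; first by rewrite inE eqxx Pa.
    move=> k /[!inE] /predU1P [-> //|sk Pk].
    exact: le_trans (i_max k sk Pk) (ltW lt_ia).
  exists i; first by rewrite inE si orbT Pi.
  move=> k /[!inE] /predU1P [-> Pa|sk Pk]; last exact: i_max.
  by move: not_gt; rewrite Pa leNgt.
- exists a; first by rewrite inE eqxx Pa.
  move=> k /[!inE] /predU1P [-> //|sk Pk].
  by have := noP k sk; rewrite Pk.
Qed.

Section CoefficientMap.
Variables (K : monomType) (R S : nzRingType) (f : {rmorphism R -> S}).

Definition malg_map (g : {malg R[K]}) : {malg S[K]} :=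
  \sum_(k <- msupp g) << f g@_k *g k >>.

Lemma mcoeff_malg_map g k : (malg_map g)@_k = f g@_k.
Proof.
rewrite [in RHS](monalgE g) /malg_map !raddf_sum /=.
by apply: eq_bigr => k' _; rewrite !mcoeffU raddfMn.
Qed.

Lemma msupp_malg_map_le g : (msupp (malg_map g) `<=` msupp g)%fset.
Proof.
apply/fsubsetP => k; rewrite -!mcoeff_neq0 mcoeff_malg_map.
by apply: contraNneq => ->; rewrite rmorph0.
Qed.

Lemma malg_map1 : malg_map 1 = 1.
Proof. by apply/malgP => k; rewrite mcoeff_malg_map !mcoeff1 rmorph_nat. Qed.

Lemma malg_mapM : {morph malg_map : a b / a * b}.
Proof.
move=> a b; apply/malgP => k.
rewrite mcoeff_malg_map.
rewrite !(mcoeffMlw _ (msupp_malg_map_le a) (msupp_malg_map_le b)).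
rewrite mcoeffMl rmorph_sum; apply: eq_bigr => k1 _.
rewrite rmorph_sum; apply: eq_bigr => k2 _.
by rewrite rmorphMn rmorphM !mcoeff_malg_map.
Qed.

Lemma malg_map_prod (s : seq {malg R[K]}) :
  malg_map (\prod_(x <- s) x) = \prod_(x <- s) malg_map x.
Proof. exact: (big_morph _ malg_mapM malg_map1). Qed.

Lemma malg_mapMn g n : malg_map (g *+ n) = malg_map g *+ n.
Proof.
by apply/malgP => k; rewrite mcoeffMn !mcoeff_malg_map mcoeffMn rmorphMn.
Qed.

Lemma malg_map_inj : injective f -> injective malg_map.
Proof.
move=> f_inj a b eq_ab; apply/malgP => k.
by apply: f_inj; rewrite -!mcoeff_malg_map eq_ab.
Qed.

Lemma malg_map_eq0 g : injective f -> (malg_map g == 0) = (g == 0).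
Proof.
move=> f_inj; apply/eqP/eqP => [g0|->]; apply/malgP => k.
  by apply: f_inj; rewrite -mcoeff_malg_map g0 !mcoeff0 rmorph0.
by rewrite mcoeff_malg_map !mcoeff0 rmorph0.
Qed.

End CoefficientMap.

Section Nonconstant.
Variable K : monomType.

Definition nonconstant (R : zmodType) (g : {malg R[K]}) : Prop :=
  exists2 k, k != mone & g@_k != 0.

Lemma nonconstant_neq0 (R : zmodType) (g : {malg R[K]}) :
  nonconstant g -> g != 0.
Proof. by move=> [k _]; apply: contraNneq => ->; rewrite mcoeff0. Qed.

Lemma nonconstantMn (R : numDomainType) (g : {malg R[K]}) n :
  (0 < n)%N -> nonconstant (g *+ n) <-> nonconstant g.
Proof.
move=> n_gt0; have gk_neq0 k : (g *+ n)@_k != 0 = (g@_k != 0).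
  by rewrite mcoeffMn mulrn_eq0 negb_or -lt0n n_gt0.
by split=> [] [k k_neq1 gk]; exists k; rewrite ?gk_neq0 in gk *.
Qed.

Lemma nonconstant_malg_map (R S : nzRingType) (f : {rmorphism R -> S})
    (g : {malg R[K]}) :
  injective f -> nonconstant (malg_map f g) <-> nonconstant g.
Proof.
move=> f_inj; have gk_neq0 k : (malg_map f g)@_k != 0 = (g@_k != 0).
  by rewrite mcoeff_malg_map raddf_eq0.
by split=> [] [k k_neq1 gk]; exists k; rewrite ?gk_neq0 in gk *.
Qed.

End Nonconstant.

Lemma nonzero_constant_unit (K : conomType) (F : fieldType) (g : {malg F[K]}) :
  g != 0 -> ~ nonconstant g -> is_unit_elt g.
Proof.
move=> g_neq0 g_const; set c := g@_mone.
have g_eq : g = c%:MP.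
  apply/malgP => k; rewrite mcoeffC; have [->|k_neq1] := eqVneq k mone.
    by rewrite mulr1n.
  by rewrite mulr0n; apply/eqP/negPn/negP => gk; apply: g_const; exists k.
have c_neq0 : c != 0 by apply: contraNneq g_neq0 => c0; rewrite g_eq c0 malgC0E.
by exists c^-1%:MP; rewrite g_eq -mpolyCM mulfV // mpolyC1E.
Qed.

Section IntegerCoefficients.
Variable K : monomType.

Lemma malg_mulrnI (R : numDomainType) n :
  (0 < n)%N -> injective (fun g : {malg R[K]} => g *+ n).
Proof.
move=> n_gt0 a b /= eq_ab; apply/malgP => k.
by apply: (pmulrnI n_gt0); rewrite /= -!mcoeffMn eq_ab.
Qed.

Lemma malg_divn (p : nat) (B : {malg int[K]}) :
  (forall k, (p%:Z %| B@_k)%Z) -> exists B', B = B' *+ p.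
Proof.
move=> pB; exists [malg k in msupp B => (B@_k %/ p)%Z]; apply/malgP => k.
rewrite mcoeffMn mcoeffE; case: ifP => [_|/negbT/mcoeff_outdom ->].
  by rewrite -mulr_natr natz divzK.
by rewrite mul0rn.
Qed.

Lemma nonconstant_intr (g : {malg int[K]}) :
  nonconstant (malg_map intr g : {malg rat[K]}) <-> nonconstant g.
Proof. exact/nonconstant_malg_map/intr_inj. Qed.

Lemma malg_clear_denominators (g : {malg rat[K]}) :
  exists2 n : nat, (0 < n)%N &
    exists G : {malg int[K]}, malg_map intr G = g *+ n.
Proof.
rewrite [g]monalgE; elim: (enum_fset _) => [|k s [n n_gt0 [G eG]]].
  exists 1%N => //; exists 0.
  by apply/malgP => k; rewrite mcoeff_malg_map big_nil mulr1n !mcoeff0.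
rewrite big_cons; set x := g@_k.
pose m := `|denq x|%N.
have m_gt0 : (0 < m)%N by rewrite absz_gt0 denq_neq0.
have numq_eq : (numq x)%:~R = x *+ m.
  by rewrite numqE -mulr_natr natr_absz gtr0_norm ?denq_gt0.
exists (n * m)%N; first by rewrite muln_gt0 n_gt0 m_gt0.
exists (G *+ m + << numq x *+ n *g k >>); apply/malgP => k'.
have := congr1 (mcoeff k') eG; rewrite mcoeff_malg_map => eGk.
rewrite mcoeff_malg_map mcoeffD mcoeffMn mcoeffU rmorphD !rmorphMn eGk.
rewrite /= numq_eq.
rewrite !mcoeffMn mcoeffD mcoeffU mulrnDl addrC -!mulrnA.
by congr (_ + _ *+ _); ring.
Qed.

End IntegerCoefficients.

Section PuiseuxMonoidAlgebra.
Variable q : posrat.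
Local Notation M := (Mq q).
Implicit Types i j k : M.

Lemma val_mmul i j : val (mmul i j) = val i + val j.
Proof. by []. Qed.

Lemma val_mone : val (mone : M) = 0.
Proof. by []. Qed.

Lemma val_Mq_ge0 k : 0 <= val k.
Proof. exact: Mq_ge0 (valP k). Qed.

Lemma val_Mq_gt0 k : k != mone -> 0 < val k.
Proof.
move=> k_neq1; rewrite lt0r val_Mq_ge0 andbT.
by apply: contra k_neq1 => /eqP k0; apply/eqP/val_inj.
Qed.

Lemma exists_top_coeff (R : zmodType) (P : pred R) (g : {malg R[M]}) :
  P 0 -> ~ (forall k, P g@_k) ->
  exists2 i, ~~ P g@_i & forall k, val i < val k -> P g@_k.
Proof.
move=> P0 /existsNP [k0 /negP nPk0].
have in_supp k : ~~ P g@_k -> k \in msupp g.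
  by rewrite -mcoeff_neq0; apply: contraNneq => ->.
have /(seq_has_max (fun k : M => val k)) [i /andP [_ nPi] i_max] :
    has (fun k => ~~ P g@_k) (msupp g).
  by apply/hasP; exists k0; first exact: in_supp.
exists i => // k lt_ik; apply/negPn/negP => nPk.
by have := i_max k (in_supp k nPk) nPk; rewrite leNgt lt_ik.
Qed.

Section TopCoefficient.
Variables (R : comNzRingType) (P : pred R).
Hypotheses (P0 : P 0) (PD : forall x y, P x -> P y -> P (x + y))
  (PM : forall x y, P x -> P (x * y)).

Lemma mcoeffM_top (g1 g2 : {malg R[M]}) i j :
  (forall k, val i < val k -> P g1@_k) ->
  (forall k, val j < val k -> P g2@_k) ->
  P ((g1 * g2)@_(mmul i j) - g1@_i * g2@_j).
Proof.
move=> top1 top2.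
have P_term k1 k2 : (k1 != i) || (k2 != j) ->
    P (g1@_k1 * g2@_k2 *+ (mmul k1 k2 == mmul i j)).
  move=> neq; have [/(congr1 val)|] := eqVneq; last by rewrite mulr0n.
  rewrite mulr1n !val_mmul => v_eq.
  have [lt1|le1] := ltP (val i) (val k1); first exact/PM/top1.
  have [lt2|le2] := ltP (val j) (val k2); first by rewrite mulrC; apply/PM/top2.
  have e1 : k1 = i by apply: val_inj; lra.
  have e2 : k2 = j by apply: val_inj; lra.
  by move: neq; rewrite e1 e2 !eqxx.
have P_sum := big_ind (fun x => P x) P0 PD.
rewrite (mcoeffMlw _ (fsubsetUr [fset i]%fset _) (fsubsetUr [fset j]%fset _)).
rewrite (bigD1_seq i) ?fset_uniq ?fset1U1 //=.
rewrite (bigD1_seq j) ?fset_uniq ?fset1U1 //=.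
rewrite eqxx mulr1n.
have -> a b c : a + b + c - a = b + c :> R by ring.
apply: PD.
  by apply: (P_sum) => k2 k2_neq; apply: P_term; rewrite k2_neq orbT.
apply: (P_sum) => k1 k1_neq; apply: (P_sum) => k2 _.
by apply: P_term; rewrite k1_neq.
Qed.

End TopCoefficient.

Lemma nonconstant_nonunit (R : idomainType) (g : {malg R[M]}) :
  nonconstant g -> ~ is_unit_elt g.
Proof.
move=> [k k_neq1 gk_neq0] [h gh].
have h_neq0 : h != 0.
  by apply: contra_eq_neq gh => ->; rewrite mulr0 eq_sym oner_eq0.
have P0 : (0 : R) == 0 := eqxx 0.
have [i gi_neq0 gi_top] :=
  exists_top_coeff (P := fun x => x == 0) P0 (fun g0 => negP gk_neq0 (g0 k)).
have [j hj_neq0 hj_top] :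
    exists2 j, h@_j != 0 & forall k, val j < val k -> h@_k == 0.
  apply: (exists_top_coeff (P := fun x => x == 0) P0) => h0.
  by apply/(negP h_neq0)/eqP/malgP => k'; rewrite mcoeff0; apply/eqP.
have PD (x y : R) : x == 0 -> y == 0 -> x + y == 0.
  by move=> /eqP-> /eqP->; rewrite addr0.
have PM (x y : R) : x == 0 -> x * y == 0 by move=> /eqP->; rewrite mul0r.
have := mcoeffM_top (P := fun x => x == 0) P0 PD PM gi_top hj_top.
rewrite gh mcoeff1.
have [/(congr1 val)|_] := eqVneq (mmul i j) mone; last first.
  by rewrite sub0r oppr_eq0 (negbTE (mulf_neq0 gi_neq0 hj_neq0)).
rewrite val_mmul val_mone => vij0 _.
have vi0 : val i = 0 by have := val_Mq_ge0 i; have := val_Mq_ge0 j; lra.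
by move: gk_neq0; rewrite (eqP (gi_top k _)) ?eqxx // vi0 val_Mq_gt0.
Qed.

Lemma malg_gauss (p : nat) (A B : {malg int[M]}) : prime p ->
  (forall k, (p%:Z %| (A * B)@_k)%Z) ->
  (forall k, (p%:Z %| A@_k)%Z) \/ (forall k, (p%:Z %| B@_k)%Z).
Proof.
move=> p_prime pAB.
have [pA|nA] := pselect (forall k, (p%:Z %| A@_k)%Z); first by left.
have [pB|nB] := pselect (forall k, (p%:Z %| B@_k)%Z); first by right.
have [i pAi Ai_top] :=
  exists_top_coeff (P := fun x => (p%:Z %| x)%Z) (dvdz0 _) nA.
have [j pBj Bj_top] :=
  exists_top_coeff (P := fun x => (p%:Z %| x)%Z) (dvdz0 _) nB.
have := mcoeffM_top (P := fun x => (p%:Z %| x)%Z) (dvdz0 _)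
  (fun x y => @rpredD _ _ x y) (fun x y => @dvdz_mulr _ x y) Ai_top Bj_top.
rewrite rpredBl ?pAB // dvdzE abszM Euclid_dvdM //.
by rewrite -!dvdzE (negbTE pAi) (negbTE pBj).
Qed.

Lemma nonconstant_factors_mulrn_irreducible (g B C : {malg int[M]}) N :
  irreducible_elt g -> (0 < N)%N -> nonconstant B -> nonconstant C ->
  B * C <> g *+ N.
Proof.
move=> [_ [_ g_irr]]; elim/ltn_ind: N B C => N IH B C N_gt0 B_nc C_nc eBC.
have [N1|N_neq1] := eqVneq N 1%N.
  move: eBC; rewrite N1 mulr1n => /esym /g_irr [].
    exact: nonconstant_nonunit B_nc.
  exact: nonconstant_nonunit C_nc.
have N_gt1 : (1 < N)%N by rewrite ltn_neqAle eq_sym N_neq1 N_gt0.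
have [p p_prime /dvdnP [N' eN]] : exists2 p, prime p & (p %| N)%N.
  by exists (pdiv N); [apply: pdiv_prime | apply: pdiv_dvd].
have p_gt0 := prime_gt0 p_prime.
have N'_gt0 : (0 < N')%N by move: N_gt0; rewrite eN muln_gt0 => /andP [].
have N'_lt : (N' < N)%N by rewrite eN ltn_Pmulr // prime_gt1.
have cancel_p B0 C0 : nonconstant C0 -> (forall k, (p%:Z %| B0@_k)%Z) ->
    nonconstant B0 -> B0 * C0 <> g *+ N.
  move=> C0_nc /malg_divn [B' ->] /(nonconstantMn _ p_gt0) B'_nc e.
  apply: (IH N' N'_lt B' C0) => //; apply: (malg_mulrnI p_gt0).
  by rewrite /= -mulrnAl e eN mulrnA.
have p_dvd_BC k : (p%:Z %| (B * C)@_k)%Z.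
  by rewrite eBC mcoeffMn eN mulrnA -mulr_natr natz dvdz_mull.
have [pB|pC] := malg_gauss p_prime p_dvd_BC.
  exact: cancel_p C_nc pB B_nc eBC.
by apply: cancel_p B_nc pC C_nc _; rewrite mulrC.
Qed.

Lemma irreducible_malg_map_intr (g : {malg int[M]}) :
  irreducible_elt g -> nonconstant g ->
  irreducible_elt (malg_map intr g : {malg rat[M]}).
Proof.
move=> g_irr g_nc.
have G_nc : nonconstant (malg_map intr g : {malg rat[M]}).
  exact/nonconstant_intr.
have G_neq0 := nonconstant_neq0 G_nc.
split=> //; split=> [|b c eG]; first exact: nonconstant_nonunit.
have [b_nc|b_const] := pselect (nonconstant b); last first.
  left; apply: nonzero_constant_unit b_const.
  by apply: contraNneq G_neq0 => b0; rewrite eG b0 mul0r.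
have [c_nc|c_const] := pselect (nonconstant c); last first.
  right; apply: nonzero_constant_unit c_const.
  by apply: contraNneq G_neq0 => c0; rewrite eG c0 mulr0.
have [n1 n1_gt0 [B eB]] := malg_clear_denominators b.
have [n2 n2_gt0 [C eC]] := malg_clear_denominators c.
have B_nc : nonconstant B.
  by rewrite -nonconstant_intr eB nonconstantMn.
have C_nc : nonconstant C.
  by rewrite -nonconstant_intr eC nonconstantMn.
exfalso.
apply: (nonconstant_factors_mulrn_irreducible (N := n1 * n2) g_irr _ B_nc C_nc).
  by rewrite muln_gt0 n1_gt0.
apply: (malg_map_inj (@intr_inj rat)).
by rewrite malg_mapM malg_mapMn eB eC mulrnAl mulrnAr -mulrnA -eG mulnC.
Qed.

End PuiseuxMonoidAlgebra.

Theorem proposition2p1 (q : posrat) :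
  atomic {malg int[Mq q]} -> atomic {malg rat[Mq q]}.
Proof.
move=> atomicZ f f_neq0 f_nonunit.
have f_nc : nonconstant f.
  by apply: contrapT => /(nonzero_constant_unit f_neq0).
have [n n_gt0 [F eF]] := malg_clear_denominators f.
have F_nc : nonconstant F.
  by rewrite -nonconstant_intr eF nonconstantMn.
have [s [s_irr eFs]] :=
  atomicZ F (nonconstant_neq0 F_nc) (nonconstant_nonunit F_nc).
have n_neq0 : n%:R != 0 :> rat by rewrite pnatr_eq0 -lt0n.
have u_unit : is_unit_elt ((n%:R^-1)%:MP : {malg rat[Mq q]}).
  by exists (n%:R)%:MP; rewrite -mpolyCM mulVf // mpolyC1E.
have f_eq : f = (n%:R^-1)%:MP * \prod_(y <- map (malg_map intr) s) y.
  rewrite big_map -malg_map_prod -eFs eF mul_malgC -scalerMnr scalerMnl.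
  by rewrite -mulr_natr mulVf ?scale1r.
rewrite f_eq; apply: (factor_into_irreducibles u_unit); last by rewrite -f_eq.
move=> _ /mapP [x xs ->]; have [x_neq0 _] := s_irr x xs.
have [x_nc|x_const] := pselect (nonconstant x).
  by right; apply: irreducible_malg_map_intr (s_irr x xs) x_nc.
left; apply: nonzero_constant_unit.
  by rewrite (malg_map_eq0 _ (@intr_inj rat)).
by move/nonconstant_intr.
Qed.
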